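(* Let $(f_n):\underline G=(G_n,p_n)\to\underline H=(H_n,q_n)$ be a level morphism of inverse sequences of groups such that the induced map $\tilde f:\varprojlim\underline G\to\varprojlim\underline H$, $\tilde f((g_n))=(f_n(g_n))$, is an isomorphism of groups. If $\tilde f$ is open (with respect to the inverse limit topologies, each $G_n$, $H_n$ discrete) and $\underline G$ is Mittag-Leffler, then the morphism $\underline f:\underline G\to\underline H$ of \textbf{Tower-Grp} determined by $(f_n)$ is a monomorphism in \textbf{Tower-Grp}.
   Context: A level morphism $(f_n)$ consists of homomorphisms $f_n:G_n\to H_n$ with $f_n\circ p_n=q_n\circ f_{n+1}$ for all $n$ (i.e. $\Phi=\mathrm{id}$). $p_{nm}=p_n\circ\cdots\circ p_{m-1}$; Mittag-Leffler: for every $n_0$ there is $n_1>n_0$ with $p_{n_0n}(G_n)=p_{n_0n_1}(G_{n_1})$ for all $n>n_1$. \textbf{Tower-Grp}: objects inverse sequences of groups; morphisms $(f_n,\Phi)$ with $\Phi:\mathbb{N}\to\mathbb{N}$, homomorphisms $f_n:G_{\Phi(n)}\to H_n$ such that for all $n'>n$ there is $m\ge\Phi(n),\Phi(n')$ with $f_n\circ p_{\Phi(n)m}=q_{nn'}\circ f_{n'}\circ p_{\Phi(n')m}$, modulo the relation: $(f_n,\Phi)\sim(g_n,\Psi)$ if every $n$ admits $m\ge\Phi(n),\Psi(n)$ with $f_n\circ p_{\Phi(n)m}=g_n\circ p_{\Psi(n)m}$. A monomorphism is a morphism $u$ with $u\circ a=u\circ b\Rightarrow a=b$. *)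

From Stdlib Require Import Arith.




Record group := Group {
  gcar :> Type;
  gmul : gcar -> gcar -> gcar;
  ginv : gcar -> gcar;
  gone : gcar;
  gmulA : forall x y z, gmul x (gmul y z) = gmul (gmul x y) z;
  gmul1l : forall x, gmul gone x = x;
  gmulVl : forall x, gmul (ginv x) x = gone
}.
Arguments gmul {g} _ _.
Arguments ginv {g} _.


Definition is_hom {G H : group} (f : G -> H) : Prop :=
  forall x y, f (gmul x y) = gmul (f x) (f y).

Record tower := Tower {
  tG : nat -> group;
  tp : forall n, tG (S n) -> tG n;
  tp_hom : forall n, is_hom (tp n)
}.

(* p_{nm} = p_n o ... o p_{m-1} : G_m -> G_n  (meaningful for n <= m;
   for n > m it returns the junk value 1, and it is only ever used with n <= m) *)
Fixpoint pnm (T : tower) (n m : nat) {struct m} : tG T m -> tG T n :=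
  match m as m0 return tG T m0 -> tG T n with
  | 0 => match Nat.eq_dec n 0 with
         | left e => fun x => eq_rect_r (tG T) x e
         | right _ => fun _ => gone (tG T n)
         end
  | S m' => match Nat.eq_dec n (S m') with
            | left e => fun x => eq_rect_r (tG T) x e
            | right _ => fun x => @pnm T n m' (tp T m' x)
            end
  end.

Definition mittag_leffler (T : tower) : Prop :=
  forall n0, exists n1, n0 < n1 /\
    forall n, n1 < n ->
      forall y : tG T n0,
        (exists x : tG T n, pnm T n0 n x = y) <->
        (exists x : tG T n1, pnm T n0 n1 x = y).

Definition level_mor (G H : tower) (f : forall n, tG G n -> tG H n) : Prop :=
  (forall n, is_hom (f n)) /\
  (forall n (x : tG G (S n)), f n (tp G n x) = tp H n (f (S n) x)).

Definition limit (T : tower) :=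
  { g : forall n, tG T n | forall n, tp T n (g (S n)) = g n }.

Lemma lim_map_proof {G H : tower} {f : forall n, tG G n -> tG H n}
  (hf : level_mor G H f) (g : limit G) :
  forall n, tp H n (f (S n) (proj1_sig g (S n))) = f n (proj1_sig g n).
Proof.
  intro n. destruct hf as [_ hc]. rewrite <- hc.
  now rewrite (proj2_sig g n).
Qed.

Definition lim_map {G H : tower} {f : forall n, tG G n -> tG H n}
  (hf : level_mor G H f) (g : limit G) : limit H :=
  exist _ (fun n => f n (proj1_sig g n)) (lim_map_proof hf g).

Definition bijective_map {A B : Type} (h : A -> B) : Prop :=
  (forall x y, h x = h y -> x = y) /\ (forall y, exists x, h x = y).

(* Inverse-limit topology: subspace topology of the product of the discrete
   spaces G_n; a basis consists of the cylinders fixing finitely many (w.l.o.g.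
   the first n+1) coordinates. *)
Definition lim_open {T : tower} (A : limit T -> Prop) : Prop :=
  forall x, A x -> exists n, forall y : limit T,
    (forall k, k <= n -> proj1_sig y k = proj1_sig x k) -> A y.

Definition open_map {G H : tower} (h : limit G -> limit H) : Prop :=
  forall A, lim_open A -> lim_open (fun y => exists x, A x /\ h x = y).

Record tmor (G H : tower) := TMor {
  tphi : nat -> nat;
  tf : forall n, tG G (tphi n) -> tG H n
}.
Arguments tphi {G H} t n.
Arguments tf {G H} t n _.

Definition is_tmor {G H : tower} (u : tmor G H) : Prop :=
  (forall n, is_hom (tf u n)) /\
  (forall n n', n < n' -> exists m, tphi u n <= m /\ tphi u n' <= m /\
     forall x : tG G m,
       tf u n (pnm G (tphi u n) m x) = pnm H n n' (tf u n' (pnm G (tphi u n') m x))).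

(* the equivalence relation defining morphisms of Tower-Grp *)
Definition tequiv {G H : tower} (u v : tmor G H) : Prop :=
  forall n, exists m, tphi u n <= m /\ tphi v n <= m /\
    forall x : tG G m,
      tf u n (pnm G (tphi u n) m x) = tf v n (pnm G (tphi v n) m x).

Definition tcomp {K G H : tower} (u : tmor G H) (a : tmor K G) : tmor K H :=
  @TMor K H (fun n => tphi a (tphi u n))
            (fun n x => tf u n (tf a (tphi u n) x)).

Definition tower_mono {G H : tower} (u : tmor G H) : Prop :=
  forall (K : tower) (a b : tmor K G), is_tmor a -> is_tmor b ->
    tequiv (tcomp u a) (tcomp u b) -> tequiv a b.

Definition level_tmor {G H : tower} (f : forall n, tG G n -> tG H n) : tmor G H :=
  @TMor G H (fun n => n) f.

(* Fix a level n. Openness of the induced map at the identity gives a level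
   N >= n such that every thread whose N-th coordinate lies in the kernel of
   f_N is trivial up to level n. Under Mittag-Leffler, every element of the
   stable image of G_N lifts to a thread, and the stable image contains
   p_{NM}(G_M) for M large. If f o a and f o b agree, then for x in K the
   quotient a_N(x) b_N(x)^-1 lies in the stable image (both factors come
   from level M) and in the kernel of f_N; it therefore projects to 1 in G_n,
   i.e. a_n(x) = b_n(x). *)
From Stdlib Require Import Arith Lia Eqdep_dec ClassicalEpsilon.

Lemma gmulI (G : group) (a x y : G) : gmul a x = gmul a y -> x = y.
Proof.
  intro h. rewrite <- (gmul1l G x), <- (gmul1l G y), <- (gmulVl G a).
  rewrite <- !gmulA, h. reflexivity.
Qed.

Lemma gmulVr (G : group) (x : G) : gmul x (ginv x) = gone G.
Proof.
  rewrite <- (gmul1l G (gmul x (ginv x))).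
  rewrite <- (gmulVl G (ginv x)) at 1.
  rewrite <- gmulA, (gmulA _ (ginv x)), gmulVl, gmul1l, gmulVl. reflexivity.
Qed.

Lemma gmul1r (G : group) (x : G) : gmul x (gone G) = x.
Proof. rewrite <- (gmulVl G x), gmulA, gmulVr, gmul1l. reflexivity. Qed.

Lemma ginv_unique (G : group) (u x : G) : gmul u x = gone G -> u = ginv x.
Proof.
  intro h. rewrite <- (gmul1r G u), <- (gmulVr G x), gmulA, h, gmul1l.
  reflexivity.
Qed.

Lemma gdiv_eq1 (G : group) (u v : G) : gmul u (ginv v) = gone G -> u = v.
Proof.
  intro h. rewrite <- (gmul1r G u), <- (gmulVl G v), gmulA, h, gmul1l.
  reflexivity.
Qed.

Lemma hom1 (G H : group) (f : G -> H) : is_hom f -> f (gone G) = gone H.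
Proof.
  intro hf. apply (gmulI H (f (gone G))).
  rewrite <- hf, gmul1l, gmul1r. reflexivity.
Qed.

Lemma homV (G H : group) (f : G -> H) :
  is_hom f -> forall x, f (ginv x) = ginv (f x).
Proof. intros hf x. apply ginv_unique. rewrite <- hf, gmulVl. now apply hom1. Qed.

Lemma hom_div (G H : group) (f : G -> H) (x y : G) :
  is_hom f -> f (gmul x (ginv y)) = gmul (f x) (ginv (f y)).
Proof. intro hf. now rewrite hf, (homV G H f hf). Qed.

Section BondingMaps.

Variable T : tower.

Lemma pnm_id n (x : tG T n) : pnm T n n x = x.
Proof.
  destruct n; cbn [pnm].
  - destruct (Nat.eq_dec 0 0) as [e|]; [|congruence].
    now rewrite (UIP_refl_nat _ e).
  - destruct (Nat.eq_dec (S n) (S n)) as [e|]; [|congruence].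
    now rewrite (UIP_refl_nat _ e).
Qed.

Lemma pnmS n m (x : tG T (S m)) : n <= m -> pnm T n (S m) x = pnm T n m (tp T m x).
Proof. intro h. cbn [pnm]. destruct (Nat.eq_dec n (S m)); [lia|reflexivity]. Qed.

Lemma pnm_comp i j k (x : tG T k) :
  i <= j -> j <= k -> pnm T i j (pnm T j k x) = pnm T i k x.
Proof.
  intros hij hjk. induction k.
  - replace j with 0 by lia. now rewrite pnm_id.
  - destruct (Nat.eq_dec j (S k)) as [->|].
    + now rewrite pnm_id.
    + rewrite (pnmS j k), (pnmS i k) by lia. apply IHk; lia.
Qed.

Lemma pnm_hom i k : i <= k -> is_hom (pnm T i k).
Proof.
  intro h. induction k; intros x y.
  - replace i with 0 by lia. now rewrite !pnm_id.
  - destruct (Nat.eq_dec i (S k)) as [->|].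
    + now rewrite !pnm_id.
    + rewrite !(pnmS i k), (tp_hom T) by lia. apply IHk; lia.
Qed.

Lemma tp_pnm k m (z : tG T (S m)) :
  k <= m -> tp T k (pnm T (S k) (S m) z) = pnm T k m (tp T m z).
Proof.
  intro h. rewrite <- (pnm_id k (tp T k _)), <- pnmS, pnm_comp by lia.
  now apply pnmS.
Qed.

Lemma pnm_limit (g : limit T) k N : k <= N -> pnm T k N (proj1_sig g N) = proj1_sig g k.
Proof.
  intro h. induction N.
  - replace k with 0 by lia. apply pnm_id.
  - destruct (Nat.eq_dec k (S N)) as [->|].
    + apply pnm_id.
    + rewrite pnmS, (proj2_sig g N) by lia. apply IHN; lia.
Qed.

Definition limit_one : limit T :=
  exist (fun g => forall k, tp T k (g (S k)) = g k)
    (fun k => gone (tG T k)) (fun k => hom1 _ _ _ (tp_hom T k)).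

Definition stable_image k (y : tG T k) : Prop :=
  forall M, k <= M -> exists x : tG T M, pnm T k M x = y.

Lemma stable_image_div k (u v : tG T k) :
  stable_image k u -> stable_image k v -> stable_image k (gmul u (ginv v)).
Proof.
  intros hu hv M hM. destruct (hu M hM) as [x <-], (hv M hM) as [y <-].
  exists (gmul x (ginv y)). now apply hom_div, pnm_hom.
Qed.

Lemma ml_image_stable :
  mittag_leffler T -> forall N, exists M, N <= M /\
    forall x : tG T M, stable_image N (pnm T N M x).
Proof.
  intros ml N. destruct (ml N) as [n1 [hn1 hml]]. exists (S n1). split; [lia|].
  intros x M hM. destruct (le_lt_dec M n1).
  - exists (pnm T M (S n1) x). apply pnm_comp; lia.
  - apply (hml M); [lia|]. apply (hml (S n1)); [lia|]. now exists x.
Qed.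

Lemma stable_image_tp :
  mittag_leffler T -> forall k (y : tG T k), stable_image k y ->
  exists z : tG T (S k), stable_image (S k) z /\ tp T k z = y.
Proof.
  intros ml k y hy. destruct (ml_image_stable ml (S k)) as [M [hM hstab]].
  destruct (hy M) as [x <-]; [lia|]. exists (pnm T (S k) M x). split; [apply hstab|].
  rewrite <- (pnm_id k (tp T k _)), <- pnmS by lia. apply pnm_comp; lia.
Qed.

Section Lifting.

Variable step : forall k (y : tG T k), stable_image k y ->
  {z : tG T (S k) | stable_image (S k) z /\ tp T k z = y}.

Fixpoint lift_seq N (y : tG T N) (hy : stable_image N y) (i : nat) :
  {z : tG T (i + N) | stable_image (i + N) z} :=
  match i with
  | 0 => exist _ y hy
  | S i' => let w := lift_seq N y hy i' in
            let s := step _ (proj1_sig w) (proj2_sig w) in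
            exist _ (proj1_sig s) (proj1 (proj2_sig s))
  end.

Lemma lift_seqS N y hy i :
  tp T (i + N) (proj1_sig (lift_seq N y hy (S i))) = proj1_sig (lift_seq N y hy i).
Proof. exact (proj2 (proj2_sig (step _ _ _))). Qed.

Lemma pnm_lift_seq N y hy i : pnm T N (i + N) (proj1_sig (lift_seq N y hy i)) = y.
Proof.
  induction i.
  - apply pnm_id.
  - change (S i + N) with (S (i + N)). now rewrite pnmS, lift_seqS by lia.
Qed.

End Lifting.

(* The k-th coordinate of the lifted thread is read off at level k + N,
   which avoids transporting along k + N = N at k = N. *)
Lemma stable_image_lift :
  mittag_leffler T -> forall N (y : tG T N), stable_image N y ->
  exists g : limit T, proj1_sig g N = y.
Proof.
  intros ml N y hy.
  pose (step k y hy := constructive_indefinite_description _ (stable_image_tp ml k y hy)).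
  pose (h := lift_seq step N y hy).
  assert (hc : forall k, tp T k (pnm T (S k) (S k + N) (proj1_sig (h (S k)))) =
                         pnm T k (k + N) (proj1_sig (h k))).
  { intro k. change (S k + N) with (S (k + N)). rewrite tp_pnm by lia.
    unfold h. now rewrite lift_seqS. }
  exists (exist _ (fun k => pnm T k (k + N) (proj1_sig (h k))) hc).
  exact (pnm_lift_seq step N y hy N).
Qed.

End BondingMaps.

Lemma level_mor_pnm (G H : tower) f (hf : level_mor G H f) k N (x : tG G N) :
  k <= N -> f k (pnm G k N x) = pnm H k N (f N x).
Proof.
  intro h. induction N.
  - replace k with 0 by lia. now rewrite !pnm_id.
  - destruct (Nat.eq_dec k (S N)) as [->|].
    + now rewrite !pnm_id.
    + rewrite !pnmS, IHN, (proj2 hf) by lia. reflexivity.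
Qed.

Lemma open_injective_kernel_small (G H : tower) f (hf : level_mor G H f) :
  (forall x y, lim_map hf x = lim_map hf y -> x = y) -> open_map (lim_map hf) ->
  forall n, exists N, n <= N /\ forall g : limit G,
    f N (proj1_sig g N) = gone (tG H N) -> proj1_sig g n = gone (tG G n).
Proof.
  intros hinj hopen n.
  pose (U (g : limit G) := forall k, k <= n -> proj1_sig g k = gone (tG G k)).
  assert (hU : lim_open U).
  { intros x hx. exists n. intros y hy k hk. rewrite hy by exact hk. now apply hx. }
  destruct (hopen U hU (lim_map hf (limit_one G))) as [N0 HN0].
  { now exists (limit_one G). }
  exists (N0 + n). split; [lia|]. intros g hg.
  destruct (HN0 (lim_map hf g)) as [x [hx e]].
  { intros k hk. simpl.
    rewrite <- (pnm_limit G g k (N0 + n)), (level_mor_pnm G H f hf), hg by lia.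
    rewrite (hom1 _ _ (pnm H k (N0 + n))) by (apply pnm_hom; lia).
    symmetry. apply hom1, hf. }
  apply hinj in e as <-. apply hx. lia.
Qed.

Lemma ml_open_injective_separates (G H : tower) f (hf : level_mor G H f) :
  (forall x y, lim_map hf x = lim_map hf y -> x = y) -> open_map (lim_map hf) ->
  mittag_leffler G ->
  forall n, exists N, n <= N /\ forall u v : tG G N,
    stable_image G N u -> stable_image G N v -> f N u = f N v ->
    pnm G n N u = pnm G n N v.
Proof.
  intros hinj hopen ml n.
  destruct (open_injective_kernel_small G H f hf hinj hopen n) as [N [hN hker]].
  exists N. split; [exact hN|]. intros u v hu hv huv.
  destruct (stable_image_lift G ml N _ (stable_image_div G N u v hu hv)) as [g hg].
  assert (h1 : proj1_sig g n = gone (tG G n)).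
  { apply hker. rewrite hg, (hom_div _ _ (f N)), huv by apply hf. apply gmulVr. }
  apply gdiv_eq1. rewrite <- (hom_div _ _ (pnm G n N)) by (apply pnm_hom; lia).
  rewrite <- hg, pnm_limit by lia. exact h1.
Qed.

Definition tmor_at {K G : tower} (a : tmor K G) n m (x : tG K m) : tG G n :=
  tf a n (pnm K (tphi a n) m x).

Lemma tmor_at_pnm {K G : tower} (a : tmor K G) n m1 m (x : tG K m) :
  tphi a n <= m1 -> m1 <= m -> tmor_at a n m x = tmor_at a n m1 (pnm K m1 m x).
Proof. intros h1 h2. unfold tmor_at. now rewrite pnm_comp. Qed.

Lemma is_tmor_compat {K G : tower} (a : tmor K G) : is_tmor a ->
  forall n n', n <= n' -> exists m0, forall m, m0 <= m -> forall x : tG K m,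
    tmor_at a n m x = pnm G n n' (tmor_at a n' m x).
Proof.
  intros [_ ha] n n' hn. destruct (Nat.eq_dec n n') as [<-|hne].
  - exists 0. intros m _ x. now rewrite pnm_id.
  - destruct (ha n n' ltac:(lia)) as [m0 [h1 [h2 hm0]]].
    exists m0. intros m hm x.
    rewrite (tmor_at_pnm a n m0), (tmor_at_pnm a n' m0) by lia. apply hm0.
Qed.

Lemma tequiv_at {K G : tower} (a b : tmor K G) : tequiv a b ->
  forall n, exists m0, forall m, m0 <= m -> forall x : tG K m,
    tmor_at a n m x = tmor_at b n m x.
Proof.
  intros hab n. destruct (hab n) as [m0 [h1 [h2 hm0]]].
  exists m0. intros m hm x. rewrite (tmor_at_pnm a n m0), (tmor_at_pnm b n m0) by lia.
  apply hm0.
Qed.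

Theorem proposition8p13 (G H : tower) (f : forall n, tG G n -> tG H n)
  (hf : level_mor G H f) :
  bijective_map (lim_map hf) ->
  open_map (lim_map hf) ->
  mittag_leffler G ->
  tower_mono (level_tmor f).
Proof.
  intros [hinj _] hopen ml K a b ha hb hfab n.
  destruct (ml_open_injective_separates G H f hf hinj hopen ml n) as [N [hN hsep]].
  destruct (ml_image_stable G ml N) as [M [hM hstab]].
  destruct (is_tmor_compat a ha n N hN) as [ma1 ha1].
  destruct (is_tmor_compat a ha N M hM) as [ma2 ha2].
  destruct (is_tmor_compat b hb n N hN) as [mb1 hb1].
  destruct (is_tmor_compat b hb N M hM) as [mb2 hb2].
  destruct (tequiv_at _ _ hfab N) as [m3 h3].
  set (m := ma1 + ma2 + mb1 + mb2 + m3 + tphi a n + tphi b n).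
  exists m. split; [simpl; lia|]. split; [simpl; lia|]. intro x.
  change (tmor_at a n m x = tmor_at b n m x).
  rewrite (ha1 m), (hb1 m) by lia.
  apply hsep; [rewrite (ha2 m) by lia; apply hstab
              |rewrite (hb2 m) by lia; apply hstab
              |exact (h3 m ltac:(lia) x)].
Qed.
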